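(* Let $(\mathcal{X},\tau,\mathcal{F})$ be either (a) the inverse image of a locally measurable vector space $(\mathcal{X}_1,\tau_1,\mathcal{F}_1)$ under a linear map $f_1\colon\mathcal{X}\to\mathcal{X}_1$ (in which case set $I=\{1\}$), or (b) the projective limit of a projective system of locally measurable vector spaces $(\mathcal{X}_i,\tau_i,\mathcal{F}_i,f_{i,j})_{i\le j}$ indexed by a directed preordered set $(I,\le)$, with canonical projections $f_i\colon\mathcal{X}\to\mathcal{X}_i$. For each $i\in I$ and $x_i\in\mathcal{X}_i$ let $\mathcal{V}_{i,x_i}$ be a local basis of neighborhoods of $x_i$ in $(\mathcal{X}_i,\tau_i)$ consisting of $\mathcal{F}_i$-measurable sets. Then for every $x\in\mathcal{X}$, the set $\mathcal{V}_x:=\{f_i^{-1}(V_i) : i\in I,\ V_i\in\mathcal{V}_{i,f_i(x)}\}$ is a local basis of neighborhoods of $x$ in $(\mathcal{X},\tau)$. In particular, every point of $\mathcal{X}$ admits a local basis of neighborhoods consisting of $\mathcal{F}$-measurable sets.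
   Context: A locally measurable vector space is a triple $(\mathcal{Y},\sigma,\mathcal{G})$ with $\mathcal{Y}$ a real vector space, $\sigma$ a (not necessarily Hausdorff) vector space topology, $\mathcal{G}$ a $\sigma$-algebra, such that every point admits a local basis of neighborhoods belonging to $\mathcal{G}$ and every continuous linear functional is $\mathcal{G}$-measurable. Inverse image: $\tau$ and $\mathcal{F}$ are the initial topology and initial $\sigma$-algebra on the vector space $\mathcal{X}$ with respect to $f_1$. Projective system: $(I,\le)$ directed preordered set, $f_{i,j}\colon\mathcal{X}_j\to\mathcal{X}_i$ for $i\le j$ measurable, continuous and linear, $f_{i,i}=\mathrm{id}$, $f_{i,k}=f_{i,j}\circ f_{j,k}$ for $i\le j\le k$; the projective limit is $\mathcal{X}=\{(x_i)\in\prod_i\mathcal{X}_i: x_i=f_{i,j}(x_j)\ \forall i\le j\}$ with $f_i$ the coordinate projections, and $\tau$, $\mathcal{F}$ the initial topology and initial $\sigma$-algebra with respect to $(f_i)_{i\in I}$. *)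

(* Set-based encoding of topologies and
   sigma-algebras on a carrier type, so that families indexed by I are easy. *)
From mathcomp Require Import all_boot all_order all_algebra.
From mathcomp Require Import all_classical all_reals all_analysis.
Set Implicit Arguments. Unset Strict Implicit. Unset Printing Implicit Defensive.
Import Order.TTheory GRing.Theory Num.Theory.
Local Open Scope classical_set_scope.
Local Open Scope ring_scope.

Definition is_topology (T : Type) (O : set (set T)) : Prop :=
  [/\ O setT,
      (forall U V, O U -> O V -> O (U `&` V)) &
      (forall (F : set (set T)), F `<=` O -> O (\bigcup_(U in F) U))].

Definition nbhd_of (T : Type) (O : set (set T)) (x : T) (N : set T) : Prop :=
  exists U, [/\ O U, U x & U `<=` N].

Definition local_basis (T : Type) (O : set (set T)) (x : T) (B : set (set T)) : Prop :=
  (forall N, B N -> nbhd_of O x N) /\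
  (forall N, nbhd_of O x N -> exists2 V, B V & V `<=` N).

Definition cont_wrt (T1 T2 : Type) (O1 : set (set T1)) (O2 : set (set T2))
  (f : T1 -> T2) : Prop := forall U, O2 U -> O1 (f @^-1` U).

(* A (not necessarily Hausdorff) vector space topology on the real vector
   space V: a topology for which addition V x V -> V and scalar
   multiplication R x V -> V are jointly continuous (product topologies,
   R with its usual topology). *)
Definition vector_topology (R : realType) (V : lmodType R) (O : set (set V)) : Prop :=
  [/\ is_topology O,
      (forall x y W, nbhd_of O (x + y) W ->
         exists U1 U2, [/\ nbhd_of O x U1, nbhd_of O y U2 &
           forall u v, U1 u -> U2 v -> W (u + v)]) &
      (forall (a : R) x W, nbhd_of O (a *: x) W ->
         exists2 e : R, 0 < e & exists U, nbhd_of O x U /\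
           forall (b : R) u, `|b - a| < e -> U u -> W (b *: u))].

Definition locally_measurable (R : realType) (V : lmodType R)
  (O : set (set V)) (G : set (set V)) : Prop :=
  [/\ vector_topology O,
      sigma_algebra setT G,
      (forall x : V, exists B, local_basis O x B /\ B `<=` G) &
      (forall phi : {linear V -> R^o},
         cont_wrt O (@open R^o) phi ->
         forall A : set R, measurable A -> G (phi @^-1` A))].

Definition init_topology (I T : Type) (X : I -> Type)
  (O : forall i, set (set (X i))) (f : forall i, T -> X i) : set (set T) :=
  smallest (@is_topology T) [set W | exists i U, O i U /\ W = f i @^-1` U].

Definition init_sigma (I T : Type) (X : I -> Type)
  (G : forall i, set (set (X i))) (f : forall i, T -> X i) : set (set T) :=
  smallest (sigma_algebra setT) [set W | exists i A, G i A /\ W = f i @^-1` A].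

Definition projlim (R : realType) (I : Type) (X : I -> lmodType R)
  (le : I -> I -> Prop) (f : forall i j, X j -> X i) : Type :=
  {x : forall i, X i | forall i j, le i j -> x i = f i j (x j)}.

Definition projlim_proj (R : realType) (I : Type) (X : I -> lmodType R)
  (le : I -> I -> Prop) (f : forall i j, X j -> X i) (i : I)
  (x : projlim le f) : X i := proj1_sig x i.

Arguments projlim {R I X} le f.
Arguments projlim_proj {R I X} le f i x.

From mathcomp Require Import all_boot all_order all_algebra.
From mathcomp Require Import all_classical all_reals all_analysis.
Local Open Scope classical_set_scope.
Local Open Scope ring_scope.

(* When the preimages [p i @^-1` U] of open sets are closed under binary
   intersection, the sets that contain such a preimage around each of their
   points already form a topology; hence they are exactly the open sets of the
   initial topology, and preimages of local bases form local bases. In both the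
   inverse image and the projective limit this closure property holds: for a
   projective limit, [p i @^-1` U1 `&` p j @^-1` U2] is the preimage under
   [p k], for [k] above [i] and [j], of [f i k @^-1` U1 `&` f j k @^-1` U2]. *)

Lemma init_topology_preimage (I T : Type) (X : I -> Type)
    (O : forall i, set (set (X i))) (p : forall i, T -> X i) i U :
  O i U -> init_topology O p (p i @^-1` U).
Proof. by move=> OU; apply: sub_gen_smallest; exists i, U. Qed.

Lemma init_sigma_preimage (I T : Type) (X : I -> Type)
    (G : forall i, set (set (X i))) (p : forall i, T -> X i) i A :
  G i A -> init_sigma G p (p i @^-1` A).
Proof. by move=> GA; apply: sub_gen_smallest; exists i, A. Qed.

Section InitialTopology.
Context {I T : Type} {X : I -> Type}.
Variables (O : forall i, set (set (X i))) (p : forall i, T -> X i).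

Definition preimages_closedI : Prop :=
  forall i j U1 U2, O i U1 -> O j U2 ->
    exists k U, O k U /\ p k @^-1` U = p i @^-1` U1 `&` p j @^-1` U2.

Definition locally_preimage_open (W : set T) : Prop :=
  forall t, W t -> exists i U, [/\ O i U, U (p i t) & p i @^-1` U `<=` W].

Hypothesis I_inhabited : inhabited I.
Hypothesis O_topology : forall i, is_topology (O i).
Hypothesis O_preimagesI : preimages_closedI.

Lemma locally_preimage_open_topology : is_topology locally_preimage_open.
Proof.
split.
- case: I_inhabited => i0 t _; exists i0, setT.
  by have [OT _ _] := O_topology i0.
- move=> W1 W2 hW1 hW2 t [W1t W2t].
  have [i [U1 [OU1 U1t sU1]]] := hW1 t W1t.
  have [j [U2 [OU2 U2t sU2]]] := hW2 t W2t.
  have [k [U [OU eU]]] := O_preimagesI _ _ _ _ OU1 OU2.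
  have Ut : (p k @^-1` U) t by rewrite eU.
  by exists k, U; split => //; rewrite eU => s [/sU1 ? /sU2 ?].
- move=> F FO t [W FW Wt].
  have [i [U [OU Ut sU]]] := FO W FW t Wt.
  by exists i, U; split => // s /sU Ws; exists W.
Qed.

Lemma init_topology_locally_preimage_open {W} :
  init_topology O p W -> locally_preimage_open W.
Proof.
move: W; apply: smallest_sub => [|_ [i [U [OU ->]]] t Ut].
  exact: locally_preimage_open_topology.
by exists i, U; split.
Qed.

Context {Vb : forall i, X i -> set (set (X i))}.
Hypothesis Vb_local_basis : forall i xi, local_basis (O i) xi (Vb i xi).

Lemma init_topology_preimage_local_basis x :
  local_basis (init_topology O p) x
    [set W | exists i V, Vb i (p i x) V /\ W = p i @^-1` V].
Proof.
split.
  move=> _ [i [V [hV ->]]].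
  have [U [OU Ux UV]] := (Vb_local_basis i (p i x)).1 V hV.
  exists (p i @^-1` U); split => //; first exact: init_topology_preimage.
  by move=> t /UV.
move=> N [W [tW Wx WN]].
have [i [U [OU Ux sU]]] := init_topology_locally_preimage_open tW x Wx.
have [V hV VU] : exists2 V, Vb i (p i x) V & V `<=` U.
  by apply: (Vb_local_basis i (p i x)).2; exists U; split.
by exists (p i @^-1` V); [exists i, V | move=> t /VU /sU /WN].
Qed.

End InitialTopology.

Arguments preimages_closedI {I T X} O p.
Arguments init_topology_preimage_local_basis {I T X O p} _ _ _ {Vb}.

Lemma preimage_local_basis_measurable {I T : Type} {X : I -> Type}
    {G : forall i, set (set (X i))} {p : forall i, T -> X i}
    {Vb : forall i, X i -> set (set (X i))} (x : T) :
  (forall i xi, Vb i xi `<=` G i) ->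
  [set W | exists i V, Vb i (p i x) V /\ W = p i @^-1` V] `<=` init_sigma G p.
Proof. by move=> VbG _ [i [V [hV ->]]]; apply: init_sigma_preimage; exact: VbG hV. Qed.

Lemma single_preimages_closedI {T X : Type} {O : set (set X)} (p : T -> X) :
  is_topology O -> preimages_closedI (fun _ : unit => O) (fun _ => p).
Proof.
by case=> _ OI _ _ _ U1 U2 OU1 OU2; exists tt, (U1 `&` U2); split; [exact: OI|].
Qed.

Lemma projlim_preimages_closedI {R : realType} {I : Type} {le : I -> I -> Prop}
    {X : I -> lmodType R} {O : forall i, set (set (X i))}
    {f : forall i j, X j -> X i} :
  (forall i j, exists k, le i k /\ le j k) ->
  (forall i, is_topology (O i)) ->
  (forall i j, le i j -> cont_wrt (O j) (O i) (f i j)) ->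
  preimages_closedI O (projlim_proj le f).
Proof.
move=> directed topO fcont i j U1 U2 OU1 OU2.
have [k [ik jk]] := directed i j.
have [_ OI _] := topO k.
exists k, (f i k @^-1` U1 `&` f j k @^-1` U2).
split; first by apply: OI; apply: fcont.
by apply/seteqP; split=> -[s s_coh] /=;
  rewrite /projlim_proj /= (s_coh i k ik) (s_coh j k jk).
Qed.

Theorem proposition3p1 (R : realType) :
  (* (a) inverse image under a linear map f1 : X -> X1, with I = {1} *)
  (forall (X X1 : lmodType R) (O1 G1 : set (set X1)) (f1 : {linear X -> X1})
      (Vb : X1 -> set (set X1)),
    locally_measurable O1 G1 ->
    (forall x1, local_basis O1 x1 (Vb x1) /\ Vb x1 `<=` G1) ->
    let tau := @init_topology unit X (fun _ => X1) (fun _ => O1) (fun _ => (f1 : X -> X1)) in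
    let F := @init_sigma unit X (fun _ => X1) (fun _ => G1) (fun _ => (f1 : X -> X1)) in
    forall x : X,
      local_basis tau x [set f1 @^-1` V | V in Vb (f1 x)] /\
      (exists B, local_basis tau x B /\ B `<=` F)) /\
  (* (b) projective limit of a projective system indexed by a directed
         preordered set (I, le) *)
  (forall (I : Type) (le : I -> I -> Prop) (X : I -> lmodType R)
      (O G : forall i, set (set (X i))) (f : forall i j, X j -> X i)
      (Vb : forall i, X i -> set (set (X i))),
    (forall i, le i i) ->
    (forall i j k, le i j -> le j k -> le i k) ->
    inhabited I ->
    (forall i j, exists k, le i k /\ le j k) ->
    (forall i, locally_measurable (O i) (G i)) ->
    (forall i j, le i j ->
       [/\ linear (f i j), cont_wrt (O j) (O i) (f i j) &
           forall A, G i A -> G j (f i j @^-1` A)]) ->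
    (forall i, f i i = id) ->
    (forall i j k, le i j -> le j k -> f i k = f i j \o f j k) ->
    (forall i xi, local_basis (O i) xi (Vb i xi) /\ Vb i xi `<=` G i) ->
    let tau := init_topology O (projlim_proj le f) in
    let F := init_sigma G (projlim_proj le f) in
    forall x : projlim le f,
      local_basis tau x
        [set W | exists i V, Vb i (projlim_proj le f i x) V /\ W = projlim_proj le f i @^-1` V] /\
      (exists B, local_basis tau x B /\ B `<=` F)).
Proof.
split.
  move=> X X1 O1 G1 f1 Vb [[topO1 _ _] _ _ _] hVb tau F x.
  have -> : [set f1 @^-1` V | V in Vb (f1 x)] =
      [set W | exists (i : unit) V, Vb (f1 x) V /\ W = f1 @^-1` V].
    by apply/seteqP; split=> [W [V hV <-]|W [_ [V [hV ->]]]]; [exists tt, V|exists V].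
  have basis := init_topology_preimage_local_basis (inhabits tt) (fun _ => topO1)
    (single_preimages_closedI f1 topO1) (fun _ x1 => (hVb x1).1) x.
  split=> //; eexists; split; first exact: basis.
  by apply: (preimage_local_basis_measurable (Vb := fun _ => Vb)) => _ x1; case: (hVb x1).
move=> I le X O G f Vb _ _ I0 directed lmO hf _ _ hVb tau F x.
have topO i : is_topology (O i) by case: (lmO i) => -[].
have fcont i j : le i j -> cont_wrt (O j) (O i) (f i j) by case/hf.
have basis := init_topology_preimage_local_basis I0 topO
  (projlim_preimages_closedI directed topO fcont) (fun i xi => (hVb i xi).1) x.
split=> //; eexists; split; first exact: basis.
by apply: (preimage_local_basis_measurable (Vb := Vb)) => i xi; case: (hVb i xi).
Qed.
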